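(* Let $m$ be a prime power and let $l,s,t$ be positive integers with $m\geq l-1$ and $2t-1\leq l$, and let $c\geq t$ be an integer with $l=c(t-1)+r$ for some $r\in\{t,\ldots,c\}$. Let $C$ be an $s$-ary $c$-frameproof code of length $l$ over an alphabet $S$ satisfying Property $P(t)$ with special element $\infty$, and put $T=S\setminus\{\infty\}$. Let $\alpha_1,\ldots,\alpha_l$ be distinct elements of $\mathbb{F}_m\cup\{\infty\}$. For a polynomial $f\in\mathbb{F}_m[X]$ let $f_\infty$ denote the coefficient of $X^{t-1}$ in $f$. For each codeword $B=(b_1,\ldots,b_l)\in C$ and each $f\in\mathbb{F}_m[X]$ with $\deg f\leq t-1$, define the word $w(B,f)$ of length $l$ over the alphabet $(T\times\mathbb{F}_m)\cup\{(\infty,\infty)\}$ whose $j$-th entry is $(\infty,\infty)$ if $b_j=\infty$; $(b_j,f_\infty)$ if $b_j\neq\infty$ and $\alpha_j=\infty$; and $(b_j,f(\alpha_j))$ otherwise. Let $C'$ be the set of all such words $w(B,f)$. Then $C'$ is a $c$-frameproof code satisfying Property $P(t)$ with special element $(\infty,\infty)$, and $C'\cup\{(\infty,\infty,\ldots,(\infty,\infty))\}$ (adjoining the word all of whose entries equal $(\infty,\infty)$) is still a $c$-frameproof code.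
   Context: Let $F$ be a finite alphabet and $l$ a positive integer. For $P\subseteq F^l$, $desc(P)=\{x\in F^l: \text{for every } i \text{ there is } y\in P \text{ with } x_i=y_i\}$. For an integer $c\geq 2$, a $c$-frameproof code is a subset $C\subseteq F^l$ with $desc(P)\cap C=P$ for every $P\subseteq C$ with $|P|\leq c$. A code is $s$-ary if its alphabet has size $s$. A $c$-frameproof code $C$ over an alphabet $S$ satisfies Property $P(t)$ if there is a special element $\infty\in S$ such that every codeword has at most $t-1$ coordinates equal to $\infty$ and every codeword is uniquely determined by specifying $t$ of its components not equal to $\infty$ (i.e., if $x,y\in C$ agree in $t$ coordinates where their common value is not $\infty$, then $x=y$). $\mathbb{F}_m$ denotes the finite field of order $m$. *)

From mathcomp Require Import all_boot all_order all_algebra all_field.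
Set Implicit Arguments. Unset Strict Implicit. Unset Printing Implicit Defensive.
Import GRing.Theory.
Local Open Scope ring_scope.

Definition word (A : finType) (l : nat) := {ffun 'I_l -> A}.

Definition desc (A : finType) (l : nat) (P : {set word A l}) : {set word A l} :=
  [set x : word A l | [forall i : 'I_l, [exists y in P, x i == y i]]].

Definition frameproof (A : finType) (l c : nat) (C : {set word A l}) : Prop :=
  forall P : {set word A l}, P \subset C -> (#|P| <= c)%N -> desc P :&: C = P.

Definition propP (A : finType) (l t : nat) (inf : A) (C : {set word A l}) : Prop :=
  (forall x, x \in C -> (#|[set i : 'I_l | x i == inf]| <= t.-1)%N) /\
  (forall x y, x \in C -> y \in C ->
     forall I : {set 'I_l}, #|I| = t ->
       (forall i, i \in I -> x i = y i /\ x i != inf) -> x = y).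

(* The new alphabet (T x F_m) u {(inf,inf)} is modelled as option (S * F):
   None stands for (inf,inf), Some (b, a) for (b, a) (only b <> inf occurs). *)
Definition wBf (S : finType) (F : finFieldType) (l t : nat) (inf : S)
  (alpha : 'I_l -> option F) (B : word S l) (f : {poly F}) : word (option (S * F)) l :=
  [ffun j => if B j == inf then None
             else Some (B j, match alpha j with
                             | None => f`_(t.-1)
                             | Some a => f.[a] end)].

From mathcomp Require Import all_boot all_order all_algebra all_field zify.
Import GRing.Theory.
Local Open Scope ring_scope.
Set Implicit Arguments. Unset Strict Implicit. Unset Printing Implicit Defensive.

(* A code with Property P(t) and l > (c+1)(t-1) is c-frameproof by pigeonhole: a
   codeword x descending from at most c codewords has at least l - (t-1) finite
   positions, each shared with one of the parents, so some parent agrees with x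
   in t finite positions and hence equals x. The words w(B,f) inherit Property
   P(t) from C because two polynomials of degree < t that agree at t distinct
   points of the projective line coincide. *)

Lemma card_bigcup_le (I T : finType) (Q : {set I}) (S : I -> {set T}) (k : nat) :
  {in Q, forall y, #|S y| <= k}%N -> (#|\bigcup_(y in Q) S y| <= #|Q| * k)%N.
Proof.
move=> leSk; rewrite -sum_nat_const.
elim/big_ind2: _ => [|n1 X1 n2 X2 le1 le2|y /leSk //]; first by rewrite cards0.
by apply: leq_trans (leq_card_setU X1 X2) _; apply: leq_add.
Qed.

Lemma exists_subset_card (T : finType) (A : {set T}) (n : nat) :
  (n <= #|A|)%N -> exists2 I : {set T}, I \subset A & #|I| = n.
Proof.
move/card_geqP=> [s [us <- sA]]; exists [set x in s].
  by apply/subsetP=> x; rewrite inE => /sA.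
by rewrite cardsE; apply/card_uniqP.
Qed.

Lemma subset_desc (A : finType) (l : nat) (P : {set word A l}) : P \subset desc P.
Proof.
apply/subsetP=> x xP; rewrite inE; apply/forallP=> i.
by apply/existsP; exists x; rewrite xP /=.
Qed.

Lemma frameproof_desc (A : finType) (l c : nat) (C : {set word A l}) :
  (forall P : {set word A l}, P \subset C -> (#|P| <= c)%N -> desc P :&: C \subset P) ->
  frameproof c C.
Proof.
move=> sub P sPC cP; apply/eqP; rewrite eqEsubset sub //=.
by rewrite subsetI subset_desc.
Qed.

Section PropertyP.

Variables (A : finType) (l t c : nat) (inf : A) (C : {set word A l}).
Hypotheses (CP : propP t inf C) (ltl : (c.+1 * t.-1 < l)%N).

Lemma mem_of_covered (Q : {set word A l}) (x : word A l) :
  Q \subset C -> (#|Q| <= c)%N -> x \in C ->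
  (forall i, x i != inf -> exists2 y, y \in Q & x i = y i) -> x \in Q.
Proof.
move=> sQC cQ xC cover; set N := ~: [set i | x i == inf].
have cardN : (l - t.-1 <= #|N|)%N.
  rewrite -{1}[l]card_ord -(cardsC [set i | x i == inf]) leq_subLR leq_add2r.
  exact: CP.1 x xC.
have [y yQ ty] : exists2 y, y \in Q & (t <= #|[set i in N | x i == y i]|)%N.
  apply/exists_inP; apply: contraLR ltl => /exists_inPn few; rewrite -leqNgt.
  have sN : N \subset \bigcup_(y in Q) [set i in N | x i == y i].
    apply/subsetP=> i iN; have /cover[y yQ xy] : x i != inf by rewrite !inE in iN.
    by apply/bigcupP; exists y; rewrite // inE iN xy /=.
  have leNQ := leq_trans (subset_leq_card sN) (card_bigcup_le (k := t.-1) _).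
  have {}leNQ : (#|N| <= c * t.-1)%N.
    apply: leq_trans (leNQ _) _; last by rewrite leq_mul2r cQ orbT.
    by move=> y /few; rewrite -ltnNge => lt; rewrite -ltnS (leq_trans lt) ?leqSpred.
  by rewrite mulSn -leq_subLR (leq_trans cardN).
have [I sI cardI] := exists_subset_card ty.
suff -> : x = y by [].
apply: (CP.2 x y xC (subsetP sQC y yQ) I cardI) => i /(subsetP sI).
by rewrite !inE => /andP[-> /eqP].
Qed.

Lemma propP_frameproof : frameproof c C.
Proof.
apply: frameproof_desc => P sPC cP; apply/subsetP=> x.
rewrite inE /desc inE => /andP[/forallP covx xC].
apply: mem_of_covered sPC cP xC _ => i _.
by have /exists_inP[y yP /eqP] := covx i; exists y.
Qed.

(* Every position of the all-[inf] word must be an [inf] position of one of at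
   most c codewords, but these have at most c (t-1) < l such positions. *)
Lemma propP_frameproof_setU_inf : frameproof c (C :|: [set [ffun => inf]]).
Proof.
set z : word A l := [ffun => inf].
apply: frameproof_desc => P sPCz cP; apply/subsetP=> x.
rewrite inE /desc inE => /andP[/forallP covx]; rewrite !inE => /orP[xC | /eqP xz].
  have sPC : P :\ z \subset C.
    apply/subsetP=> y; rewrite !inE => /andP[yz /(subsetP sPCz)].
    by rewrite !inE (negbTE yz) orbF.
  have : x \in P :\ z.
    apply: mem_of_covered sPC _ xC _.
      exact: leq_trans (subset_leq_card (subsetDl _ _)) cP.
    move=> i xi; have /exists_inP[y yP /eqP xy] := covx i; exists y => //.
    by rewrite !inE yP andbT; apply: contra xi => /eqP yz; rewrite xy yz ffunE.
  by rewrite inE => /andP[].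
subst x; apply: contraLR ltl => zP; rewrite -leqNgt.
have sPC : P \subset C.
  apply/subsetP=> y yP; move: (subsetP sPCz y yP).
  by rewrite !inE => /orP[//|/eqP yz]; move: zP; rewrite -yz yP.
have cover : [set: 'I_l] \subset \bigcup_(y in P) [set i | y i == inf].
  apply/subsetP=> i _; have /exists_inP[y yP /eqP zy] := covx i.
  by apply/bigcupP; exists y; rewrite // inE -zy ffunE.
have := leq_trans (subset_leq_card cover) (card_bigcup_le (k := t.-1) _).
rewrite cardsT card_ord => /(_ (fun y yP => CP.1 y (subsetP sPC y yP))) leP.
by rewrite (leq_trans leP) // leq_mul2r leqW ?orbT.
Qed.

End PropertyP.

(* Evaluation on the projective line of a polynomial of degree < n: at the
   point at infinity ([None]) its value is the coefficient of X^(n-1). *)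
Definition peval (R : nzRingType) (n : nat) (f : {poly R}) (a : option R) : R :=
  if a is Some x then f.[x] else f`_n.-1.

Lemma pevalB (R : nzRingType) (n : nat) (f g : {poly R}) (a : option R) :
  peval n (f - g) a = peval n f a - peval n g a.
Proof. by case: a => [x|] /=; rewrite ?hornerE ?coefB. Qed.

Lemma size_pmap_id (T : eqType) (s : seq (option T)) :
  uniq s -> size (pmap id s) = (size s - (None \in s))%N.
Proof.
move=> us; rewrite size_pmap -(count_predC isSome s) -count_uniq_mem //.
by rewrite (@eq_count _ (predC _) (pred1 None)) ?addnK // => -[].
Qed.

(* The point at infinity costs one root but also lowers the degree by one. *)
Lemma peval_roots_poly_eq0 (F : idomainType) (n : nat) (h : {poly F})
    (s : seq (option F)) :
  (size h <= n)%N -> uniq s -> (n <= size s)%N ->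
  all (fun a => peval n h a == 0) s -> h = 0.
Proof.
move=> szh us lens /allP h0.
have szh' : (size h <= n - (None \in s))%N.
  case: (boolP (None \in s)) => [/h0 /eqP hn|_]; last by rewrite subn0.
  rewrite subn1; apply/leq_sizeP => j; rewrite leq_eqVlt => /orP[/eqP <- //|ltj].
  by move/leq_sizeP: szh; apply; rewrite (leq_trans (leqSpred n)).
apply: (@roots_geq_poly_eq0 _ _ (pmap id s)).
- by apply/allP=> x; rewrite mem_pmap map_id => /h0.
- by apply: (@pmap_uniq _ _ id Some) => // -[].
- by rewrite size_pmap_id //; apply: leq_trans szh' (leq_sub2r _ lens).
Qed.

Lemma poly_eq_peval (F : idomainType) (n : nat) (f g : {poly F})
    (s : seq (option F)) :
  (size f <= n)%N -> (size g <= n)%N -> uniq s -> (n <= size s)%N ->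
  {in s, forall a, peval n f a = peval n g a} -> f = g.
Proof.
move=> szf szg us lens fg; apply/eqP; rewrite -subr_eq0; apply/eqP.
apply: (peval_roots_poly_eq0 _ us lens).
  by apply: leq_trans (size_polyD _ _) _; rewrite size_polyN geq_max szf szg.
by apply/allP=> a /fg; rewrite pevalB => ->; rewrite subrr.
Qed.

Section WordConstruction.

Variables (S : finType) (F : finFieldType) (l t : nat) (inf : S).
Variable alpha : 'I_l -> option F.

Lemma wBfE (B : word S l) (f : {poly F}) (j : 'I_l) :
  wBf t inf alpha B f j =
    if B j == inf then None else Some (B j, peval t f (alpha j)).
Proof. by rewrite ffunE. Qed.

Lemma wBf_agree (B B' : word S l) (f g : {poly F}) (j : 'I_l) :
  wBf t inf alpha B f j = wBf t inf alpha B' g j ->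
  wBf t inf alpha B f j != None ->
  [/\ B j = B' j, B j != inf & peval t f (alpha j) = peval t g (alpha j)].
Proof.
rewrite !wBfE; case: eqP => // /eqP Bj_fin.
by case: eqP => // _ [-> ->].
Qed.

Lemma propP_wBf (C : {set word S l}) (C' : {set word (option (S * F)) l}) :
  propP t inf C -> injective alpha ->
  (forall x, x \in C' <-> exists B (f : {poly F}),
     [/\ B \in C, (size f <= t)%N & x = wBf t inf alpha B f]) ->
  propP t None C'.
Proof.
move=> [CPinf CPagree] alpha_inj memC'; split.
  move=> _ /memC'[B [f [BC _ ->]]].
  have -> : [set j | wBf t inf alpha B f j == None] = [set j | B j == inf].
    by apply/setP=> j; rewrite !inE wBfE; case: (B j == inf).
  exact: CPinf.
move=> _ _ /memC'[B [f [BC szf ->]]] /memC'[B' [g [B'C szg ->]]] I cardI agree.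
have agreeI j : j \in I ->
    [/\ B j = B' j, B j != inf & peval t f (alpha j) = peval t g (alpha j)].
  by case/agree; apply: wBf_agree.
have <- : B = B' by apply: (CPagree B B' BC B'C I cardI) => j /agreeI[].
suff -> : f = g by [].
apply: (poly_eq_peval (s := map alpha (enum I))) szf szg _ _ _.
- by rewrite map_inj_uniq ?enum_uniq.
- by rewrite size_map -cardE cardI.
- by move=> a /mapP[j]; rewrite mem_enum => /agreeI[_ _ fg] ->.
Qed.

End WordConstruction.

Unset Implicit Arguments.

Theorem lemma2 (F : finFieldType) (l s t c r : nat) (S : finType) (inf : S)
  (C : {set word S l}) (alpha : 'I_l -> option F)
  (C' : {set word (option (S * F)) l}) :
  (0 < l)%N -> (0 < s)%N -> (0 < t)%N ->
  (l - 1 <= #|F|)%N -> (2 * t - 1 <= l)%N ->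
  (t <= c)%N -> l = (c * (t - 1) + r)%N -> (t <= r <= c)%N ->
  #|S| = s ->
  frameproof c C -> propP t inf C ->
  injective alpha ->
  (forall x, x \in C' <->
     exists B (f : {poly F}), [/\ B \in C, (size f <= t)%N & x = wBf t inf alpha B f]) ->
  [/\ frameproof c C', propP t None C' &
      frameproof c (C' :|: [set [ffun => None]])].
Proof.
move=> _ _ t_gt0 _ _ _ l_eq /andP[t_le_r _] _ _ CP alpha_inj memC'.
have C'P := propP_wBf CP alpha_inj memC'.
have ltl : (c.+1 * t.-1 < l)%N by rewrite l_eq mulSn; lia.
split; [exact: propP_frameproof C'P ltl | exact: C'P |].
exact: propP_frameproof_setU_inf C'P ltl.
Qed.
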